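(* Let $q=2^n$, $a,b\in\mathbb{F}_{q^2}^{*}$, and $\xi(a,b)=\sum_{\lambda\in U}(-1)^{\mathrm{Tr}_1^{2n}\left(\frac{a}{\lambda+b}\right)}$. Then $$\xi(a,b)=\begin{cases}1+(-1)^{\mathrm{Tr}_1^n(a\overline{a})}q, & \text{if } b\in U \text{ and } \mathrm{Tr}_n^{2n}(a\overline{b})=0,\\ 1, & \text{if } b\in U \text{ and } \mathrm{Tr}_n^{2n}(a\overline{b})\neq0,\\ \left(1-\mathcal{K}_n\!\left(\frac{a\overline{a}}{1+b^2\overline{b}^2}\right)\right)(-1)^{\mathrm{Tr}_1^{2n}\left(\frac{\overline{a}b}{1+b\overline{b}}\right)}, & \text{if } b\in\mathbb{F}_{q^2}^{*}\setminus U.\end{cases}$$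
   Context: For $k\mid m$, $\mathrm{Tr}_k^{m}(x)=x+x^{2^k}+\cdots+x^{2^{(m/k-1)k}}$ is the trace from $\mathbb{F}_{2^m}$ to $\mathbb{F}_{2^k}$. For $x\in\mathbb{F}_{q^2}$ write $\overline{x}=x^{q}$; $U=\{\eta\in\mathbb{F}_{q^2}:\eta^{q+1}=1\}$. Division by zero uses the convention $\frac10=0$ (so the term $\lambda=b$, if $b\in U$, contributes $1$). The binary Kloosterman sum is $\mathcal{K}_n(a)=\sum_{x\in\mathbb{F}_{2^n}}(-1)^{\mathrm{Tr}_1^n(\frac1x+ax)}$. *)

From mathcomp Require Import all_boot all_order all_algebra all_field.
Set Implicit Arguments. Unset Strict Implicit. Unset Printing Implicit Defensive.
Import GRing.Theory.
Local Open Scope ring_scope.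

Section Defs.
Context {F : finFieldType}.

Definition tr (k m : nat) (x : F) : F :=
  \sum_(i < m %/ k) x ^+ (2 ^ (i * k)).

(* (-1)^t for t in F_2 (embedded in F): 1 if t = 0, -1 otherwise *)
Definition sgnF (t : F) : int := if t == 0 then 1 else -1.

Definition conjq (n : nat) (x : F) : F := x ^+ (2 ^ n).

Definition Ucirc (n : nat) : {set F} := [set eta : F | eta ^+ (2 ^ n + 1) == 1].

(* binary Kloosterman sum over the subfield F_{2^n} = { x : x^(2^n) = x }.
   x^-1 is 0 at 0 (mathcomp convention). *)
Definition kloost (n : nat) (a : F) : int :=
  \sum_(x : F | x ^+ (2 ^ n) == x) sgnF (tr 1 n (x^-1 + a * x)).

Definition xi (n : nat) (a b : F) : int :=
  \sum_(l in Ucirc n) sgnF (tr 1 (2 * n) (a / (l + b))).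

End Defs.

From HB Require Import structures.
From mathcomp Require Import all_boot all_order all_algebra all_solvable all_field.
From mathcomp Require Import zify ring.

Set Implicit Arguments.
Unset Strict Implicit.
Unset Printing Implicit Defensive.

Import GRing.Theory.
Local Open Scope ring_scope.

(* In F = F_(q^2) of characteristic 2, t |-> (-1)^(Tr t) is an additive
   character and Tr_1^(2n) = Tr_1^n o Tr_n^(2n).

   If b is not in U, the Moebius map l |-> (l + b) / (conj(b) l + 1) permutes U
   and turns a / (l + b) into a conj(b) / (1 + b conj(b)) + d / l with
   d = a / (1 + b conj(b)), so xi(a, b) is a character value times
   sum_(mu in U) (-1)^(Tr (d mu)).  The latter equals 1 - K_n(d conj(d)): writing
   A = d conj(d), for each t in F_q the solutions of x + conj(x) = t with
   x conj(x) = A and those of y + A / y = t with y in F_q^* are roots of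
   X^2 + t X + A, so there are at most two of them, and there are exactly two
   because |d U| + |F_q^*| = 2q.  Hence
   sum_(x in d U) (-1)^(Tr_1^n (x + conj(x))) + (K_n(A) - 1)
     = 2 sum_(t in F_q) (-1)^(Tr_1^n t) = 0.

   If b is in U, then a / (l + b) = a conj(b) w where w = b / (l + b) runs over
   the q solutions of w + conj(w) = 1.  When a conj(b) is in F_q every term
   equals (-1)^(Tr_1^n (a conj(a))); otherwise translating w by a suitable
   element of F_q changes the sign of every term, so the sum vanishes. *)

Lemma card_unity_roots (F : finFieldType) (k : nat) :
  (k %| #|F|.-1)%N -> #|[set x : F | x ^+ k == 1]| = k.
Proof.
move=> k_dvd; have F_gt1 := finNzRing_gt1 F.
have N_gt0 : (0 < #|F|.-1)%N by rewrite -ltnS prednK // ltnW.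
have [z prim_z] : exists z : F, (#|F|.-1).-primitive_root z.
  pose rs := enum [set~ (0 : F)].
  have unity_rs : all (#|F|.-1).-unity_root rs.
    apply/allP => x; rewrite mem_enum !inE => x0; rewrite unity_rootE.
    apply/eqP; apply: (mulIf x0).
    by rewrite -exprSr prednK ?mul1r ?expf_card // ltnW.
  have size_rs : (#|F|.-1 <= size rs)%N by rewrite -cardE cardsC1.
  by have /hasP[z _] := has_prim_root N_gt0 unity_rs (enum_uniq _) size_rs; exists z.
have prim_w := dvdn_prim_root prim_z k_dvd; set w := z ^+ _ in prim_w.
have -> : [set x : F | x ^+ k == 1] = [set w ^+ i | i : 'I_k].
  apply/setP => x; rewrite inE.
  apply/eqP/imsetP => [/(prim_rootP prim_w)[i ->] | [i _ ->]]; first by exists i.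
  by rewrite exprAC (prim_expr_order prim_w) expr1n.
rewrite card_imset ?card_ord // => i j /eqP.
by rewrite (eq_prim_root_expr prim_w) !modn_small // => /eqP /val_inj.
Qed.

Lemma card_roots (F : finFieldType) (p : {poly F}) :
  p != 0 -> (#|[set x | root p x]| <= (size p).-1)%N.
Proof.
move=> p0; have roots_p : all (root p) (enum [set x | root p x]).
  by apply/allP => x; rewrite mem_enum inE.
rewrite cardE -ltnS (leq_trans (max_poly_roots p0 roots_p (enum_uniq _))) //.
exact: leqSpred.
Qed.

Lemma size_trace_poly (R : nzRingType) m :
  size (\sum_(i < m.+1) 'X^(2 ^ i) : {poly R}) = (2 ^ m).+1.
Proof.
elim: m => [|m IHm]; first by rewrite big_ord1 expn0 size_polyXn.
rewrite big_ord_recr /= addrC size_polyDl size_polyXn // IHm ltnS expnS.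
by rewrite -{1}(mul1n (2 ^ m)%N) ltn_pmul2r ?expn_gt0.
Qed.

Lemma card_quadratic_roots (F : finFieldType) (S : {set F}) (t A : F) :
  {in S, forall x, x ^+ 2 + t * x + A = 0} -> (#|S| <= 2)%N.
Proof.
move=> hS; have [-> | [x xS]] := set_0Vmem S; first by rewrite cards0.
apply: (@leq_trans #|[set x; - x - t]|); last by rewrite cards2 ltnS leq_b1.
apply/subset_leq_card/subsetP => y yS; rewrite !inE.
have : (y - x) * (y + x + t) = (y ^+ 2 + t * y + A) - (x ^+ 2 + t * x + A) by ring.
by rewrite hS // hS // subrr => /eqP; rewrite mulf_eq0 subr_eq0 -addrA addr_eq0 opprD.
Qed.

Lemma idemf_eq01 (F : fieldType) (u : F) : u ^+ 2 = u -> u = 0 \/ u = 1.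
Proof.
move=> u2; have /eqP : u * (u - 1) = 0 by rewrite mulrBr mulr1 -expr2 u2 subrr.
by rewrite mulf_eq0 subr_eq0 => /orP[] /eqP ->; [left | right].
Qed.

Section Reindexing.
Variables T T' : finType.

Lemma reindex_bij_on (V : nmodType) (S S' : {set T}) (h h' : T -> T) (G : T -> V) :
    {in S, forall x, h x \in S'} -> {in S', forall y, h' y \in S} ->
    {in S, cancel h h'} -> {in S', cancel h' h} ->
  \sum_(y in S') G y = \sum_(x in S) G (h x).
Proof.
move=> hS h'S' hK h'K; rewrite (reindex_onto h h' h'K).
apply: eq_bigl => x; apply/andP/idP => [[hxS' /eqP <-] | xS]; first exact: h'S'.
by rewrite hS // hK.
Qed.

Lemma sum_fibers (V : nmodType) (G : T' -> V) (S : {set T}) (Ts : {set T'})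
    (f : T -> T') :
    {in S, forall x, f x \in Ts} ->
  \sum_(x in S) G (f x) = \sum_(t in Ts) G t *+ #|[set x in S | f x == t]|.
Proof.
move=> fS; rewrite (partition_big f (mem Ts)) //=.
apply: eq_bigr => t _; rewrite -sumr_const; apply: eq_big => x; rewrite ?inE //.
by case/andP => _ /eqP ->.
Qed.

Lemma card_fibers (S : {set T}) (Ts : {set T'}) (f : T -> T') :
    {in S, forall x, f x \in Ts} ->
  #|S| = (\sum_(t in Ts) #|[set x in S | f x == t]|)%N.
Proof.
move=> fS; rewrite -sum1_card (@sum_fibers nat (fun=> 1%N) _ _ _ fS).
by apply: eq_bigr => t _; rewrite natn.
Qed.

End Reindexing.

Lemma sum_sign_reversing (T : finType) (S : {set T}) (h : T -> T) (G : T -> int) :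
    injective h -> (forall x, (h x \in S) = (x \in S)) ->
    {in S, forall x, G (h x) = - G x} ->
  \sum_(x in S) G x = 0.
Proof.
move=> h_inj hS hG; have : \sum_(x in S) G x = - \sum_(x in S) G x.
  rewrite {1}(reindex_inj h_inj) -sumrN.
  by apply: eq_big => x; rewrite hS // => /hG.
lia.
Qed.

Section CharacteristicTwo.
Variable F : finFieldType.
Hypothesis pchar2 : 2 \in [pchar F].

Lemma frobD k (x y : F) : (x + y) ^+ (2 ^ k) = x ^+ (2 ^ k) + y ^+ (2 ^ k).
Proof. by apply: exprDn_pchar; rewrite (eq_pnat _ (pcharf_eq pchar2)) pnatX pnat_id. Qed.

Lemma addr_eq0_pchar2 (x y : F) : (x + y == 0) = (x == y).
Proof. by rewrite addr_eq0 (oppr_pchar2 pchar2). Qed.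

Lemma sqrf_inj : injective (fun x : F => x ^+ 2).
Proof.
move=> x y /= sq; have : (x + y) ^+ (2 ^ 1) = 0 by rewrite frobD sq (addrr_pchar2 pchar2).
by move/eqP; rewrite expf_eq0 /= addr_eq0_pchar2 => /eqP.
Qed.

Lemma tr1E m (x : F) : tr 1 m x = \sum_(i < m) x ^+ (2 ^ i).
Proof. by rewrite /tr divn1; apply: eq_bigr => i _; rewrite muln1. Qed.

Lemma tr1D m : {morph @tr F 1 m : x y / x + y}.
Proof. by move=> x y; rewrite !tr1E -big_split; apply: eq_bigr => i _; rewrite frobD. Qed.

Lemma tr10 m : tr 1 m (0 : F) = 0.
Proof. by rewrite tr1E big1 // => i _; rewrite expr0n expn_eq0. Qed.

Lemma tr1X2 m (x : F) : tr 1 m (x ^+ 2) = tr 1 m x ^+ 2.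
Proof.
rewrite !tr1E -[in RHS](pFrobenius_autE pchar2) rmorph_sum.
by apply: eq_bigr => i _; rewrite /= pFrobenius_autE -!exprM mulnC.
Qed.

Lemma tr1X2E m (x : F) : tr 1 m (x ^+ 2) = tr 1 m x + x + x ^+ (2 ^ m).
Proof.
have trS : tr 1 m.+1 x = x + tr 1 m (x ^+ 2).
  rewrite !tr1E big_ord_recl expn0 expr1; congr (_ + _).
  by apply: eq_bigr => i _; rewrite -exprM expnS.
rewrite -[LHS](addKr x) -trS tr1E big_ord_recr /= -tr1E.
by rewrite (oppr_pchar2 pchar2) addrCA addrA.
Qed.

Lemma tr1_idem m (x : F) : x ^+ (2 ^ m) = x -> tr 1 m x ^+ 2 = tr 1 m x.
Proof. by move=> xm; rewrite -tr1X2 tr1X2E xm -addrA (addrr_pchar2 pchar2) addr0. Qed.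

Lemma sgnF_idemD (t s : F) :
  t ^+ 2 = t -> s ^+ 2 = s -> sgnF (t + s) = sgnF t * sgnF s.
Proof.
move=> /idemf_eq01[] -> /idemf_eq01[] ->; rewrite /sgnF ?addr0 ?add0r ?eqxx ?oner_eq0 //.
by rewrite (addrr_pchar2 pchar2) eqxx.
Qed.

Lemma sgnF_tr1D m (x y : F) : x ^+ (2 ^ m) = x -> y ^+ (2 ^ m) = y ->
  sgnF (tr 1 m (x + y)) = sgnF (tr 1 m x) * sgnF (tr 1 m y).
Proof. by move=> xm ym; rewrite tr1D sgnF_idemD // tr1_idem. Qed.

Lemma sgnF_tr1X2 m (x : F) : sgnF (tr 1 m (x ^+ 2)) = sgnF (tr 1 m x).
Proof. by rewrite tr1X2 /sgnF expf_eq0. Qed.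

End CharacteristicTwo.

Section QuadraticExtension.
Variables (F : finFieldType) (n : nat).
Hypothesis cardF : #|F| = (2 ^ (2 * n))%N.
Local Notation q := (2 ^ n)%N.

Lemma pchar2 : 2 \in [pchar F].
Proof. exact: card_finPcharP cardF _. Qed.

Lemma n_gt0 : (0 < n)%N.
Proof. by case: n cardF => // /eqP; rewrite muln0 expn0 gtn_eqF ?finNzRing_gt1. Qed.

Lemma q_gt1 : (1 < q)%N.
Proof. by rewrite -{1}(expn0 2) ltn_exp2l // n_gt0. Qed.

Lemma cardF_pred : #|F|.-1 = ((q - 1) * (q + 1))%N.
Proof. by rewrite cardF mulnC expnM -subn1 (subn_sqr _ 1). Qed.

Lemma conjq_is_nmod_morphism : nmod_morphism (@conjq F n).
Proof. by split=> [|x y]; rewrite /conjq ?frobD ?pchar2 // expr0n expn_eq0. Qed.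

Lemma conjq_is_monoid_morphism : monoid_morphism (@conjq F n).
Proof. by split=> [|x y]; rewrite /conjq ?expr1n // exprMn. Qed.

HB.instance Definition _ := GRing.isNmodMorphism.Build F F (@conjq F n)
  conjq_is_nmod_morphism.
HB.instance Definition _ := GRing.isMonoidMorphism.Build F F (@conjq F n)
  conjq_is_monoid_morphism.

Lemma conjqK : involutive (@conjq F n).
Proof. by move=> x; rewrite /conjq -exprM -expnD addnn -mul2n -cardF expf_card. Qed.

Definition Fq : {set F} := [set x : F | conjq n x == x].

Lemma conjq_Fq (x : F) : x \in Fq -> conjq n x = x.
Proof. by rewrite inE => /eqP. Qed.

Lemma norm_Fq (x : F) : x * conjq n x \in Fq.
Proof. by rewrite inE rmorphM /= conjqK mulrC. Qed.

Lemma trace_Fq (x : F) : x + conjq n x \in Fq.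
Proof. by rewrite inE rmorphD /= conjqK addrC. Qed.

Lemma inU (x : F) : (x \in Ucirc n) = (x * conjq n x == 1).
Proof. by rewrite inE exprD expr1 mulrC. Qed.

Lemma U_neq0 (x : F) : x \in Ucirc n -> x != 0.
Proof. by apply: contraTneq => ->; rewrite inU mul0r eq_sym oner_eq0. Qed.

Lemma conjq_U (x : F) : x \in Ucirc n -> conjq n x = x^-1.
Proof. by rewrite inU => /eqP /mulr1_eq. Qed.

Lemma invU (x : F) : (x^-1 \in Ucirc n) = (x \in Ucirc n).
Proof. by rewrite !inU fmorphV /= -invfM invr_eq1. Qed.

Lemma card_Fq : #|Fq| = q.
Proof.
have -> : Fq = 0 |: [set x : F | x ^+ (q - 1) == 1].
  apply/setP => x; rewrite !inE /conjq; have [-> | x0] := eqVneq x 0.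
    by rewrite expr0n expn_eq0 /= !eqxx.
  rewrite -{1}(subnK (ltnW q_gt1)) addn1 exprSr.
  by rewrite -[X in _ == X]mul1r (inj_eq (mulIf x0)).
rewrite (cardsU1 (0 : F)) card_unity_roots ?cardF_pred ?dvdn_mulr // !inE expr0n.
by rewrite subn_eq0 leqNgt q_gt1 eq_sym oner_eq0 add1n subn1 prednK // ltnW // q_gt1.
Qed.

Lemma card_U : #|Ucirc n : {set F}| = q.+1.
Proof. by rewrite /Ucirc card_unity_roots ?addn1 // cardF_pred addn1 dvdn_mull. Qed.

Lemma trn_2n_eq0 (x : F) : (tr n (2 * n) x == 0) = (x \in Fq).
Proof.
rewrite /tr mulnK ?n_gt0 // big_ord_recl big_ord1 /= mul0n mul1n expr1.
by rewrite addr_eq0_pchar2 ?pchar2 // eq_sym inE.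
Qed.

Lemma tr1_2n (x : F) : tr 1 (2 * n) x = tr 1 n (x + conjq n x).
Proof.
rewrite tr1D ?pchar2 // !tr1E mul2n -addnn big_split_ord /=; congr (_ + _).
by apply: eq_bigr => i _; rewrite /conjq -exprM -expnD.
Qed.

Lemma tr1_2n_conjq (x : F) : tr 1 (2 * n) (conjq n x) = tr 1 (2 * n) x.
Proof. by rewrite !tr1_2n conjqK addrC. Qed.

Lemma sgnF_tr1_2nD (x y : F) :
  sgnF (tr 1 (2 * n) (x + y)) = sgnF (tr 1 (2 * n) x) * sgnF (tr 1 (2 * n) y).
Proof. by rewrite sgnF_tr1D ?pchar2 // -cardF expf_card. Qed.

Lemma sgnF_tr1nD (x y : F) : x \in Fq -> y \in Fq ->
  sgnF (tr 1 n (x + y)) = sgnF (tr 1 n x) * sgnF (tr 1 n y).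
Proof. by move=> /conjq_Fq xq /conjq_Fq yq; rewrite sgnF_tr1D ?pchar2. Qed.

Lemma tr1n_onto : exists2 k, k \in Fq & tr 1 n k = 1.
Proof.
pose P : {poly F} := \sum_(i < n) 'X^(2 ^ i).
have sizeP : size P = (2 ^ n.-1).+1 by rewrite /P -(prednK n_gt0) size_trace_poly.
have P0 : P != 0 by rewrite -size_poly_eq0 sizeP.
suff [k kFq trk0] : exists2 k, k \in Fq & tr 1 n k != 0.
  exists k => //; have [trk|//] := idemf_eq01 (tr1_idem pchar2 (conjq_Fq kFq)).
  by rewrite trk eqxx in trk0.
apply/exists_inP; apply: contraT; rewrite negb_exists_in => /forall_inP tr0.
have : (#|Fq| <= (size P).-1)%N.
  apply: leq_trans (card_roots P0); apply/subset_leq_card/subsetP => x xFq.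
  rewrite inE /root /P horner_sum; under eq_bigr do rewrite hornerXn.
  by rewrite -tr1E; apply/negPn/tr0.
by rewrite sizeP card_Fq -{1}(prednK n_gt0) expnS leqNgt ltn_Pmull ?expn_gt0.
Qed.

Lemma sum_sgnF_tr1n : \sum_(t in Fq) sgnF (tr 1 n t) = 0.
Proof.
have [k kFq trk] := tr1n_onto.
apply: (sum_sign_reversing (addrI k)) => [x | x xFq].
  by rewrite !inE rmorphD /= conjq_Fq // (inj_eq (addrI k)).
by rewrite sgnF_tr1nD // trk /sgnF oner_eq0 mulN1r.
Qed.

Section KloostermanIdentity.
Variable d : F.
Hypothesis d0 : d != 0.

Let A := d * conjq n d.
Let V := [set x : F | x * conjq n x == A].
Let traceFiber (t : F) := [set x in V | x + conjq n x == t].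
Let kloostFiber (t : F) := [set y in Fq :\ 0 | y + A / y == t].
Let chi (t : F) := sgnF (tr 1 n t).

Let card_V : #|V| = q.+1.
Proof.
rewrite -card_U -[#|Ucirc n|](card_imset _ (mulfI d0)); congr #|pred_of_set _|.
apply/setP => x; rewrite inE; apply/eqP/imsetP => [Nx | [mu]]; last first.
  by rewrite inU => /eqP Nmu ->; rewrite rmorphM /= mulrACA Nmu mulr1.
exists (x / d); last by rewrite mulrC divfK.
by rewrite inU rmorphM fmorphV /= mulrACA Nx -invfM divff // mulf_neq0 ?fmorph_eq0.
Qed.

Let fiber_roots t x : x \in traceFiber t :|: kloostFiber t -> x ^+ 2 + t * x + A = 0.
Proof.
rewrite !inE => /orP[/andP[/eqP <- /eqP <-] | /andP[/andP[x0 _] /eqP <-]].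
  have -> : x ^+ 2 + (x + conjq n x) * x + x * conjq n x
          = (x ^+ 2 + x ^+ 2) + (x * conjq n x + x * conjq n x) by ring.
  by rewrite !(addrr_pchar2 pchar2).
have -> : x ^+ 2 + (x + A / x) * x + A = (x ^+ 2 + x ^+ 2) + (A / x * x + A) by ring.
by rewrite divfK // !(addrr_pchar2 pchar2).
Qed.

Let fiber_sizes_le2 t : t \in Fq -> (#|traceFiber t| + #|kloostFiber t| <= 2)%N.
Proof.
move=> tFq; have [-> | t0] := eqVneq t 0.
  have sqrt_le1 (S : {set F}) : {in S, forall x, x ^+ 2 = A} -> (#|S| <= 1)%N.
    move=> hS; apply/card_le1_eqP => x y xS yS.
    by apply: (sqrf_inj pchar2); rewrite /= !hS.
  have root0 x : x \in traceFiber 0 :|: kloostFiber 0 -> x ^+ 2 = A.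
    by move/fiber_roots/eqP; rewrite mul0r addr0 addr_eq0_pchar2 ?pchar2 // => /eqP.
  rewrite -[2%N]/(1 + 1)%N; apply: leq_add; apply: sqrt_le1 => x xS; apply: root0;
    by rewrite inE xS ?orbT.
rewrite -cardsUI; have -> : traceFiber t :&: kloostFiber t = set0.
  apply/setP => x; rewrite !inE; apply: contra_neqF t0.
  by move=> /and3P[/andP[_ /eqP <-] /andP[_ /eqP ->] _]; rewrite (addrr_pchar2 pchar2).
by rewrite cards0 addn0; exact: card_quadratic_roots (@fiber_roots t).
Qed.

Let kloost_map_Fq : {in Fq :\ 0, forall y, y + A / y \in Fq}.
Proof.
move=> y; rewrite inE => /andP[_ yFq].
by rewrite inE rmorphD rmorphM fmorphV /= !conjq_Fq ?norm_Fq.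
Qed.

Let fiber_sizes_eq2 t : t \in Fq -> (#|traceFiber t| + #|kloostFiber t| = 2)%N.
Proof.
have le2 u : u \in Fq -> (#|traceFiber u| + #|kloostFiber u| <= 2
                            ?= iff (#|traceFiber u| + #|kloostFiber u| == 2))%N.
  by move=> uFq; apply/leqif_eq/fiber_sizes_le2.
have cV : #|V| = (\sum_(u in Fq) #|traceFiber u|)%N.
  exact: (card_fibers (f := fun x => x + conjq n x) (fun x _ => trace_Fq x)).
have cK : #|Fq :\ 0| = (\sum_(u in Fq) #|kloostFiber u|)%N.
  exact: card_fibers kloost_map_Fq.
have /forall_inP all2 : [forall (u | u \in Fq), #|traceFiber u| + #|kloostFiber u| == 2].
  rewrite -(leqif_sum le2).2 big_split /= -cV -cK sum_nat_const card_V.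
  have := cardsD1 0 Fq; rewrite card_Fq inE rmorph0 eqxx add1n => ->.
  by rewrite muln2 -addnn !addSn addnS.
by move=> /all2/eqP.
Qed.

Let sum_fibers_sgnF :
  \sum_(x in V) chi (x + conjq n x) + \sum_(y in Fq :\ 0) chi (y + A / y) = 0.
Proof.
rewrite (sum_fibers chi (f := fun x => x + conjq n x) (fun x _ => trace_Fq x)).
rewrite (sum_fibers chi kloost_map_Fq) -big_split /=.
rewrite (eq_bigr (fun t => chi t *+ 2)) => [|t tFq]; last first.
  by rewrite -mulrnDr fiber_sizes_eq2.
by rewrite sumrMnl sum_sgnF_tr1n mul0rn.
Qed.

Let kloostE : kloost n A = 1 + \sum_(y in Fq :\ 0) chi (y + A / y).
Proof.
rewrite /kloost (bigD1 0) /= ?expr0n ?expn_eq0 //.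
rewrite invr0 mulr0 addr0 tr10 ?pchar2 // {1}/sgnF eqxx; congr (_ + _).
rewrite (reindex_inj invr_inj) /=; apply: eq_big => y.
  by rewrite !inE exprVn (inj_eq invr_inj) invr_eq0 andbC.
by move=> _; rewrite invrK mulrC.
Qed.

Lemma sum_U_sgnF_tr :
  \sum_(mu in Ucirc n) sgnF (tr 1 (2 * n) (d * mu)) = 1 - kloost n (d * conjq n d).
Proof.
have -> : \sum_(mu in Ucirc n) sgnF (tr 1 (2 * n) (d * mu))
        = \sum_(x in V) chi (x + conjq n x).
  rewrite [RHS](reindex_bij_on (S := Ucirc n) (h := fun mu => d * mu)
                                (h' := fun x => x / d)).
  - by apply: eq_bigr => mu _; rewrite tr1_2n.
  - by move=> mu; rewrite inU inE rmorphM /= mulrACA => /eqP ->; rewrite mulr1.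
  - move=> x; rewrite inE inU rmorphM fmorphV /= mulrACA -invfM => /eqP ->.
    by rewrite divff // mulf_neq0 ?fmorph_eq0.
  - by move=> mu _ /=; rewrite mulrC mulKf.
  - by move=> x _ /=; rewrite mulrC divfK.
rewrite -/A kloostE opprD addNKr; apply/eqP; rewrite -addr_eq0.
exact/eqP/sum_fibers_sgnF.
Qed.

End KloostermanIdentity.

Section OffCircle.
Variables a b : F.
Hypotheses (a0 : a != 0) (bU : b \notin Ucirc n).

Let c := b * conjq n b.
Let denom x := conjq n b * x + 1.
Let mobius x := (x + b) / denom x.

Let c1 : 1 + c != 0.
Proof. by apply: contra bU; rewrite addr_eq0_pchar2 ?pchar2 // eq_sym inU. Qed.

Let denom_neq0 x : x \in Ucirc n -> denom x != 0.
Proof.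
rewrite inU => /eqP Nx; apply: contra bU; rewrite addr_eq0_pchar2 ?pchar2 // inU.
move=> /eqP bx1; have : (conjq n b * x) * conjq n (conjq n b * x) = 1.
  by rewrite bx1 rmorph1 mulr1.
by rewrite rmorphM /= conjqK mulrACA Nx mulr1 mulrC => ->.
Qed.

Let mobius_addb x : denom x != 0 -> mobius x + b = x * (1 + c) / denom x.
Proof.
rewrite /mobius /denom /c => Dx.
have -> : (x + b) / (conjq n b * x + 1) + b
        = (x * (1 + b * conjq n b) + (b + b)) / (conjq n b * x + 1) by field.
by rewrite (addrr_pchar2 pchar2) addr0.
Qed.

Let denom_mobius x : denom x != 0 -> denom (mobius x) = (1 + c) / denom x.
Proof.
rewrite /mobius /denom /c => Dx.
have -> : conjq n b * ((x + b) / (conjq n b * x + 1)) + 1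
        = (1 + b * conjq n b + (conjq n b * x + conjq n b * x))
          / (conjq n b * x + 1) by field.
by rewrite (addrr_pchar2 pchar2) addr0.
Qed.

Let mobiusK : {in Ucirc n, involutive mobius}.
Proof.
move=> x /denom_neq0 Dx; rewrite {1}/mobius mobius_addb // denom_mobius //.
by move: Dx c1; rewrite /denom /c => Dx c1'; field; apply/andP.
Qed.

Let mobius_U : {in Ucirc n, forall x, mobius x \in Ucirc n}.
Proof.
move=> x xU; have Dx := denom_neq0 xU; move: xU; rewrite !inU => /eqP Nx.
rewrite /mobius rmorphM fmorphV /= mulf_div.
have -> : (x + b) * conjq n (x + b) = denom x * conjq n (denom x).
  apply/eqP; rewrite -subr_eq0 /denom !rmorphD !rmorphM rmorph1 /= conjqK.
  have -> : (x + b) * (conjq n x + conjq n b)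
           - (conjq n b * x + 1) * (b * conjq n x + 1)
          = (x * conjq n x - 1) * (1 - b * conjq n b) by ring.
  by rewrite Nx subrr mul0r.
by rewrite divff // mulf_neq0 ?fmorph_eq0.
Qed.

Lemma xi_off_circle :
  xi n a b = (1 - kloost n (a * conjq n a / (1 + b ^+ 2 * conjq n b ^+ 2)))
             * sgnF (tr 1 (2 * n) (conjq n a * b / (1 + b * conjq n b))).
Proof.
pose d := a / (1 + c).
have shift x : x \in Ucirc n -> a / (mobius x + b) = a * conjq n b / (1 + c) + d * x^-1.
  move=> xU; have x0 := U_neq0 xU; have Dx := denom_neq0 xU; rewrite mobius_addb //.
  by move: Dx c1; rewrite /d /denom /c => Dx c1'; field; apply/and3P.
rewrite /xi (reindex_bij_on (fun l => sgnF (tr 1 (2 * n) (a / (l + b))))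
  mobius_U mobius_U mobiusK mobiusK).
under eq_bigr => x xU do rewrite shift // sgnF_tr1_2nD.
have conjq_c : conjq n c = c by rewrite /c rmorphM /= conjqK mulrC.
rewrite -mulr_sumr mulrC; congr (_ * _).
  rewrite (reindex_inj invr_inj); under eq_bigl do rewrite invU.
  under eq_bigr do rewrite invrK.
  rewrite sum_U_sgnF_tr ?mulf_neq0 ?invr_eq0 // /d rmorphM fmorphV rmorphD rmorph1 /=.
  have -> : b ^+ 2 * conjq n b ^+ 2 = c ^+ 2 by rewrite /c exprMn.
  have -> : 1 + c ^+ 2 = (1 + c) ^+ 2 by rewrite -[2%N]/(2 ^ 1)%N frobD ?pchar2 // expr1n.
  by rewrite conjq_c; congr (1 - kloost n _); field.
by rewrite -tr1_2n_conjq rmorphM fmorphV rmorphM rmorphD rmorph1 /= conjqK conjq_c.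
Qed.

End OffCircle.

Section OnCircle.
Variables a b : F.
Hypothesis bU : b \in Ucirc n.

Let c := a * conjq n b.
Let W := [set w : F | w + conjq n w == 1].
Let to_W l := b / (l + b).
Let from_W w := b / w + b.
Let b0 : b != 0 := U_neq0 bU.

Let xi_on_circleE :
  xi n a b = 1 + \sum_(l in Ucirc n :\ b) sgnF (tr 1 (2 * n) (c * to_W l)).
Proof.
rewrite /xi (bigD1 b) //= (addrr_pchar2 pchar2) invr0 mulr0 tr10 ?pchar2 //.
rewrite {1}/sgnF eqxx; congr (_ + _); apply: eq_big => [l | l]; first by rewrite !inE andbC.
by rewrite /c /to_W conjq_U // mulrA mulfVK.
Qed.

Let to_W_in : {in Ucirc n :\ b, forall l, to_W l \in W}.
Proof.
move=> l; rewrite in_setD1 => /andP[lb lU].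
have lb0 : l + b != 0 by rewrite addr_eq0_pchar2 ?pchar2.
rewrite inE /to_W rmorphM fmorphV rmorphD /= !conjq_U //; apply/eqP.
by field; rewrite b0 (U_neq0 lU) addrC lb0.
Qed.

Let from_W_in : {in W, forall w, from_W w \in Ucirc n :\ b}.
Proof.
move=> w; rewrite inE => /eqP wW.
have w0 : w != 0.
  by apply: contra_eq_neq wW => ->; rewrite (rmorph0 (@conjq F n)) addr0 eq_sym oner_eq0.
set u := conjq n w in wW *; have u0 : u != 0 by rewrite fmorph_eq0.
rewrite in_setD1 -subr_eq0 /from_W addrK mulf_neq0 ?invr_eq0 //= inU.
rewrite rmorphD rmorphM fmorphV /= conjq_U // -/u.
have -> : (b / w + b) * (b^-1 / u + b^-1) = (1 + (w + u) + w * u) / (w * u).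
  by field; apply/and3P.
by rewrite wW (addrr_pchar2 pchar2) add0r divff // mulf_neq0.
Qed.

Let to_WK : {in Ucirc n :\ b, cancel to_W from_W}.
Proof.
move=> l; rewrite in_setD1 => /andP[lb _].
have lb0 : l + b != 0 by rewrite addr_eq0_pchar2 ?pchar2.
rewrite /from_W /to_W; have -> : b / (b / (l + b)) = l + b by field; apply/andP.
by rewrite -addrA (addrr_pchar2 pchar2) addr0.
Qed.

Let from_WK : {in W, cancel from_W to_W}.
Proof.
move=> w _; rewrite /to_W /from_W -addrA (addrr_pchar2 pchar2) addr0.
have [-> | w0] := eqVneq w 0; first by rewrite invr0 mulr0 invr0 mulr0.
by field; apply/andP.
Qed.

Lemma xi_on_circle_Fq :
  c \in Fq -> xi n a b = 1 + sgnF (tr 1 n (a * conjq n a)) * (2 ^ n)%N%:Z.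
Proof.
move=> cFq; rewrite xi_on_circleE (eq_bigr (fun=> sgnF (tr 1 n (a * conjq n a)))).
  rewrite sumr_const -mulr_natr natz.
  by have := cardsD1 b (Ucirc n); rewrite bU card_U add1n => -[<-].
move=> l lUb; rewrite tr1_2n rmorphM /= conjq_Fq // -mulrDr.
have := to_W_in lUb; rewrite inE => /eqP ->; rewrite mulr1.
have Nb : b * conjq n b = 1 by move: bU; rewrite inU => /eqP.
rewrite -(sgnF_tr1X2 pchar2) expr2 -{2}(conjq_Fq cFq) /c rmorphM /= conjqK.
by rewrite mulrACA [conjq n b * b]mulrC Nb mulr1.
Qed.

Lemma xi_on_circle_notFq : c \notin Fq -> xi n a b = 1.
Proof.
move=> cFq; rewrite xi_on_circleE -[RHS]addr0; congr (_ + _).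
rewrite -(reindex_bij_on (fun w => sgnF (tr 1 (2 * n) (c * w)))
  to_W_in from_W_in to_WK from_WK).
have [k kFq trk] := tr1n_onto.
have e0 : c + conjq n c != 0 by apply: contra cFq; rewrite addr_eq0_pchar2 ?pchar2 // inE eq_sym.
set k0 := k / (c + conjq n c).
have k0Fq : k0 \in Fq.
  by rewrite inE rmorphM fmorphV /= (conjq_Fq kFq) (conjq_Fq (trace_Fq c)).
apply: (sum_sign_reversing (G := fun w => sgnF (tr 1 (2 * n) (c * w))) (addrI k0)).
  by move=> w; rewrite !inE rmorphD /= (conjq_Fq k0Fq) addrACA (addrr_pchar2 pchar2) add0r.
move=> w _; rewrite mulrDr sgnF_tr1_2nD tr1_2n [conjq n (c * _)]rmorphM /= (conjq_Fq k0Fq).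
by rewrite -mulrDl [(_ + _) * _]mulrC divfK // trk /sgnF oner_eq0 mulN1r.
Qed.

End OnCircle.

End QuadraticExtension.

Theorem lemma5 (F : finFieldType) (n : nat) (a b : F)
  (hF : #|F| = (2 ^ (2 * n))%N) (ha : a != 0) (hb : b != 0) :
  [/\ (b \in Ucirc n -> tr n (2 * n) (a * conjq n b) = 0 ->
         xi n a b = 1 + sgnF (tr 1 n (a * conjq n a)) * (2 ^ n)%N%:Z),
      (b \in Ucirc n -> tr n (2 * n) (a * conjq n b) != 0 ->
         xi n a b = 1)
    & (b \notin Ucirc n ->
         xi n a b =
           (1 - kloost n (a * conjq n a / (1 + b ^+ 2 * conjq n b ^+ 2)))
           * sgnF (tr 1 (2 * n) (conjq n a * b / (1 + b * conjq n b))))].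
Proof.
split=> bU.
- by move=> /eqP; rewrite trn_2n_eq0 //; apply: xi_on_circle_Fq.
- by rewrite trn_2n_eq0 //; apply: xi_on_circle_notFq.
- exact: xi_off_circle.
Qed.
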